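(* For all integers $s\geq 2$ and $t\geq 1$, $$(-1)^t\sigma(s,t)=\sum_{i=0}^{s-2}2^{i}\binom{t+i-1}{i}\sigma(s-i,t+i)+(-1)^t2^s\sum_{j=0}^{t-2}(-1)^j\binom{s+j-1}{j}\lambda(s+j)\lambda(t-j)$$ $$\qquad-2^{s-1}\binom{s+t-2}{s-1}\sum_{p\geq 1}\frac{H_p}{(2p+1)^{s+t-1}}-2^s\binom{s+t-2}{s-1}\lambda(s+t-1)\ln 2,$$ where an empty sum equals $0$.
   Context: $H_p=1+\frac12+\cdots+\frac1p$. For integers $t\geq 1$, $n\geq 1$ let $S_n^{(t)}=\sum_{k=1}^{n}\frac{1}{(2k-1)^t}$, and for integers $s\geq 2$, $t\geq 1$ let $\sigma(s,t)=\sum_{n\geq 1}\frac{S_n^{(t)}}{n^s}$. For real $s>1$, $\lambda(s)=\sum_{n\geq 1}\frac{1}{(2n-1)^s}$. *)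

From Stdlib Require Import Reals.
From Coquelicot Require Import Coquelicot.
Open Scope R_scope.

Fixpoint rsum (n : nat) (f : nat -> R) : R :=
  match n with
  | O => 0
  | S m => rsum m f + f m
  end.

Definition H (p : nat) : R := rsum p (fun k => / INR (k + 1)).

(* S_n^{(t)} = sum_{k=1}^n 1/(2k-1)^t. *)
Definition Sodd (t n : nat) : R := rsum n (fun k => / (INR (2 * k + 1)) ^ t).

(* sigma(s,t) = sum_{n>=1} S_n^{(t)} / n^s. *)
Definition sigmaST (s t : nat) : R :=
  Series (fun n => Sodd t (n + 1) / (INR (n + 1)) ^ s).

(* lambda(s) = sum_{n>=1} 1/(2n-1)^s  (only needed at integer s). *)
Definition lambda (s : nat) : R :=
  Series (fun n => / (INR (2 * n + 1)) ^ s).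

(* With x = 2k+1 and y = 2m+1 one has 2n = x + y for n = k+m+1, so
   sigma(s,t) = 2^s * sum_{k,m >= 0} x^-t (x+y)^-s.  Iterating the partial fraction
   1/(x (x+y)) = (1/y) (1/x - 1/(x+y)) splits x^-t (x+y)^-s into terms
   y^-(t+i) (x+y)^-(s-i), which sum (after exchanging k and m) to
   sigma(s-i,t+i) / 2^(s-i), terms y^-(s+j) x^-(t-j), which sum to
   lambda(s+j) lambda(t-j), and the single term y^-(s+t-1) (1/x - 1/(x+y)).
   Summed over x, 1/x - 1/(x+y) gives ln 2 + H_m / 2: the alternating harmonic
   series plus a telescoping one.  All rearrangements are of nonnegative double
   series, justified by Tonelli's theorem. *)

From Stdlib Require Import Reals Lra Lia.
From Coquelicot Require Import Coquelicot.
Open Scope R_scope.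

Lemma rsum_sum_n (f : nat -> R) N : sum_n f N = rsum (S N) f.
Proof.
  induction N as [|N IH].
  - rewrite sum_O. simpl. ring.
  - rewrite sum_Sn, IH. reflexivity.
Qed.

Lemma rsum_ext n (f g : nat -> R) :
  (forall k, (k < n)%nat -> f k = g k) -> rsum n f = rsum n g.
Proof.
  induction n as [|n IH]; intros Hfg; simpl; auto.
  rewrite IH, Hfg; auto; intros; apply Hfg; lia.
Qed.

Lemma rsum_plus n (f g : nat -> R) : rsum n (fun k => f k + g k) = rsum n f + rsum n g.
Proof. induction n as [|n IH]; simpl; rewrite ?IH; ring. Qed.

Lemma rsum_scal n c (f : nat -> R) : rsum n (fun k => c * f k) = c * rsum n f.
Proof. induction n as [|n IH]; simpl; rewrite ?IH; ring. Qed.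

Lemma rsum_recr n (f : nat -> R) : rsum (S n) f = rsum n f + f n.
Proof. reflexivity. Qed.

Lemma rsum_minus n (f g : nat -> R) : rsum n (fun k => f k - g k) = rsum n f - rsum n g.
Proof. induction n as [|n IH]; simpl; rewrite ?IH; ring. Qed.

Lemma rsum_recl n (f : nat -> R) : rsum (S n) f = f 0%nat + rsum n (fun k => f (S k)).
Proof. induction n as [|n IH]; simpl in *; rewrite ?IH; ring. Qed.

Lemma rsum_eq0 n (f : nat -> R) : (forall k, (k < n)%nat -> f k = 0) -> rsum n f = 0.
Proof.
  induction n as [|n IH]; intros Hf; simpl; auto.
  rewrite IH, Hf; [ring|lia|]. intros; apply Hf; lia.
Qed.

Lemma rsum_const n c : rsum n (fun _ => c) = INR n * c.
Proof. induction n as [|n IH]; simpl rsum; rewrite ?IH, ?S_INR; simpl; ring. Qed.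

Lemma rsum_telescope n (g : nat -> R) : rsum n (fun k => g k - g (S k)) = g 0%nat - g n.
Proof. induction n as [|n IH]; simpl; rewrite ?IH; ring. Qed.

Lemma rsum_le n (f g : nat -> R) :
  (forall k, (k < n)%nat -> f k <= g k) -> rsum n f <= rsum n g.
Proof.
  induction n as [|n IH]; intros Hfg; simpl; [lra|].
  assert (rsum n f <= rsum n g) by (apply IH; intros; apply Hfg; lia).
  specialize (Hfg n ltac:(lia)). lra.
Qed.

Lemma rsum_nonneg n (f : nat -> R) : (forall k, (k < n)%nat -> 0 <= f k) -> 0 <= rsum n f.
Proof.
  intros Hf. rewrite <- (Rmult_0_r (INR n)), <- rsum_const. apply rsum_le; auto.
Qed.

Lemma rsum_le_mono n m (f : nat -> R) :
  (forall k, 0 <= f k) -> (n <= m)%nat -> rsum n f <= rsum m f.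
Proof. intros Hf Hnm. induction Hnm; simpl; [lra|]. specialize (Hf m). lra. Qed.

Lemma ex_series_nonneg_bounded (a : nat -> R) (B : R) :
  (forall n, 0 <= a n) -> (forall N, rsum N a <= B) -> ex_series a /\ Series a <= B.
Proof.
  intros Ha HB.
  destruct (ex_finite_lim_seq_incr (sum_n a) B) as [l Hl].
  - intros n. rewrite !rsum_sum_n. simpl. specialize (Ha (S n)). lra.
  - intros n. rewrite rsum_sum_n. apply HB.
  - assert (Hs : is_series a l) by exact Hl.
    split; [exists l; exact Hs|]. rewrite (is_series_unique _ _ Hs).
    apply (is_lim_seq_le (sum_n a) (fun _ => B) l B); auto using is_lim_seq_const.
    intros n. rewrite rsum_sum_n. apply HB.
Qed.

Lemma ex_series_nonneg_le (a b : nat -> R) :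
  (forall n, 0 <= a n <= b n) -> ex_series b -> ex_series a.
Proof.
  intros Hab Hb. apply (@ex_series_le R_AbsRing R_CompleteNormedModule a b); auto.
  intros n. change (Rabs (a n) <= b n). rewrite Rabs_pos_eq; apply Hab.
Qed.

Lemma rsum_le_Series (a : nat -> R) N :
  (forall n, 0 <= a n) -> ex_series a -> rsum N a <= Series a.
Proof.
  intros Ha [l Hl]. rewrite (is_series_unique _ _ Hl).
  apply (is_lim_seq_le (fun _ => rsum N a) (fun n => sum_n a (n + N)) (rsum N a) l).
  - intros n. rewrite rsum_sum_n. apply rsum_le_mono; auto; lia.
  - apply is_lim_seq_const.
  - apply (is_lim_seq_incr_n (sum_n a) N l). exact Hl.
Qed.

Lemma term_le_Series (a : nat -> R) k :
  (forall n, 0 <= a n) -> ex_series a -> a k <= Series a.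
Proof.
  intros Ha He. apply (Rle_trans _ (rsum (S k) a)); [|apply rsum_le_Series; auto].
  simpl. assert (0 <= rsum k a) by (apply rsum_nonneg; auto). lra.
Qed.

Lemma Series_nonneg (a : nat -> R) : (forall n, 0 <= a n) -> 0 <= Series a.
Proof.
  intros Ha. unfold Series.
  assert (Hle := Lim_seq_le_loc (fun _ => 0) (sum_n a)). rewrite Lim_seq_const in Hle.
  destruct (Lim_seq (sum_n a)); simpl; try lra.
  apply Hle. exists 0%nat. intros n _. rewrite rsum_sum_n. apply rsum_nonneg; auto.
Qed.

Lemma is_series_finite (a : nat -> R) N :
  (forall n, (N <= n)%nat -> a n = 0) -> is_series a (rsum N a).
Proof.
  intros Hz. change (is_lim_seq (sum_n a) (rsum N a)).
  apply (is_lim_seq_ext_loc (fun _ => rsum N a)); [|apply is_lim_seq_const].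
  exists N. intros n Hn. rewrite rsum_sum_n.
  replace (S n) with (N + (S n - N))%nat by lia. generalize (S n - N)%nat as d.
  induction d as [|d IH]; [f_equal; lia|].
  rewrite Nat.add_succ_r. simpl. rewrite <- IH, Hz by lia. ring.
Qed.

Lemma is_series_shift_zeros (a : nat -> R) N l :
  (forall n, (n < N)%nat -> a n = 0) -> is_series (fun n => a (N + n)%nat) l -> is_series a l.
Proof.
  intros Hz Hl.
  assert (Ea : ex_series a) by (apply (ex_series_incr_n a N); exists l; exact Hl).
  replace l with (Series a); [apply Series_correct, Ea|].
  rewrite (Series_incr_n_aux a N Hz). apply is_series_unique, Hl.
Qed.

Lemma is_series_rsum (G : nat -> nat -> R) K :
  (forall j, (j < K)%nat -> ex_series (G j)) ->
  is_series (fun m => rsum K (fun j => G j m)) (rsum K (fun j => Series (G j))).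
Proof.
  induction K as [|K IH]; intros HG; simpl.
  - apply (is_series_finite _ 0). auto.
  - apply (is_series_plus (fun m => rsum K (fun j => G j m)) (G K)).
    + apply IH. intros; apply HG; lia.
    + apply Series_correct, HG. lia.
Qed.

Definition is_double_series (F : nat -> nat -> R) (l : R) : Prop :=
  (forall k, ex_series (F k)) /\ is_series (fun k => Series (F k)) l.

Lemma is_double_series_unique F l l' :
  is_double_series F l -> is_double_series F l' -> l = l'.
Proof.
  intros [_ Hl] [_ Hl']. rewrite <- (is_series_unique _ _ Hl). apply is_series_unique, Hl'.
Qed.

Lemma is_double_series_ext F G l :
  (forall k m, F k m = G k m) -> is_double_series F l -> is_double_series G l.
Proof.
  intros E [Hrow Hl]. split.
  - intros k. apply (ex_series_ext (F k)); auto.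
  - apply (is_series_ext (fun k => Series (F k))); auto.
    intros k. apply Series_ext; auto.
Qed.

Lemma is_double_series_plus F G lF lG :
  is_double_series F lF -> is_double_series G lG ->
  is_double_series (fun k m => F k m + G k m) (lF + lG).
Proof.
  intros [F1 F2] [G1 G2]. split.
  - intros k. apply (ex_series_plus _ _ (F1 k) (G1 k)).
  - apply (is_series_ext (fun k => Series (F k) + Series (G k))).
    + intros k. symmetry. apply Series_plus; auto.
    + apply (is_series_plus _ _ _ _ F2 G2).
Qed.

Lemma is_double_series_scal c F l :
  is_double_series F l -> is_double_series (fun k m => c * F k m) (c * l).
Proof.
  intros [F1 F2]. split.
  - intros k. apply (ex_series_scal_l c _ (F1 k)).
  - apply (is_series_ext (fun k => c * Series (F k))).
    + intros k. symmetry. apply Series_scal_l.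
    + apply (is_series_scal_l c _ _ F2).
Qed.

Lemma is_double_series_minus F G lF lG :
  is_double_series F lF -> is_double_series G lG ->
  is_double_series (fun k m => F k m - G k m) (lF - lG).
Proof.
  intros HF HG.
  apply (is_double_series_ext (fun k m => F k m + -1 * G k m)); [intros; ring|].
  replace (lF - lG) with (lF + -1 * lG) by ring.
  apply is_double_series_plus, is_double_series_scal; auto.
Qed.

Lemma is_double_series_lincomb n (c : nat -> R) (F : nat -> nat -> nat -> R) (l : nat -> R) :
  (forall i, (i < n)%nat -> is_double_series (F i) (l i)) ->
  is_double_series (fun k m => rsum n (fun i => c i * F i k m)) (rsum n (fun i => c i * l i)).
Proof.
  induction n as [|n IH]; intros HF; simpl.
  - assert (Hzero : is_series (fun _ : nat => 0) 0) by (apply (is_series_finite _ 0); auto).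
    split; [intros k; exists 0; exact Hzero|].
    apply (is_series_ext (fun _ => 0)); auto.
    intros k. symmetry. apply is_series_unique, Hzero.
  - apply is_double_series_plus.
    + apply IH. intros; apply HF; lia.
    + apply is_double_series_scal, HF. lia.
Qed.

Lemma is_double_series_prod (a b : nat -> R) (la lb : R) :
  is_series a la -> is_series b lb -> is_double_series (fun k m => a k * b m) (la * lb).
Proof.
  intros Ha Hb. split.
  - intros k. exists (a k * lb). apply (is_series_scal_l (a k) _ _ Hb).
  - apply (is_series_ext (fun k => a k * lb)).
    + intros k. rewrite Series_scal_l, (is_series_unique _ _ Hb). reflexivity.
    + apply (is_series_scal_r lb _ _ Ha).
Qed.

Lemma ex_double_series_bounded (F : nat -> nat -> R) (b : nat -> R) :
  (forall k m, 0 <= F k m) -> (forall k N, rsum N (F k) <= b k) -> ex_series b ->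
  exists l, is_double_series F l.
Proof.
  intros Hpos Hb Eb.
  assert (Hrow : forall k, ex_series (F k) /\ Series (F k) <= b k)
    by (intros k; apply ex_series_nonneg_bounded; auto).
  assert (Hcol : ex_series (fun k => Series (F k))).
  { apply (ex_series_nonneg_le _ b); auto.
    intros k. split; [apply Series_nonneg; auto|apply Hrow]. }
  exists (Series (fun k => Series (F k))). split; [apply Hrow|apply Series_correct, Hcol].
Qed.

Lemma is_double_series_swap_le F l :
  (forall k m, 0 <= F k m) -> is_double_series F l ->
  exists l', is_double_series (fun k m => F m k) l' /\ l' <= l.
Proof.
  intros Hpos [Hrow Hl].
  assert (Hsum : ex_series (fun k => Series (F k))) by (exists l; exact Hl).
  assert (Hcol : forall k, ex_series (fun m => F m k)).
  { intros k. apply (ex_series_nonneg_le _ (fun m => Series (F m))); auto.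
    intros m. split; auto. apply term_le_Series; auto. }
  assert (Hbound : forall N, rsum N (fun k => Series (fun m => F m k)) <= l).
  { intros N.
    rewrite <- (is_series_unique _ _ (is_series_rsum (fun k m => F m k) N (fun k _ => Hcol k))).
    rewrite <- (is_series_unique _ _ Hl). apply Series_le; auto.
    intros m. split; [apply rsum_nonneg; auto|apply rsum_le_Series; auto]. }
  destruct (ex_series_nonneg_bounded _ _ (fun k => Series_nonneg _ (fun m => Hpos m k)) Hbound)
    as [Hex Hle].
  exists (Series (fun k => Series (fun m => F m k))).
  split; [split; [exact Hcol|apply Series_correct, Hex]|exact Hle].
Qed.

Lemma is_double_series_swap F l :
  (forall k m, 0 <= F k m) -> is_double_series F l -> is_double_series (fun k m => F m k) l.
Proof.
  intros Hpos HF.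
  destruct (is_double_series_swap_le F l Hpos HF) as [l' [HF' Hle]].
  destruct (is_double_series_swap_le _ l' (fun k m => Hpos m k) HF') as [l'' [HF'' Hge]].
  replace l with l'; [exact HF'|].
  rewrite <- (is_double_series_unique _ _ _ HF HF'') in Hge. lra.
Qed.

Lemma is_series_antidiagonal F l :
  (forall k m, 0 <= F k m) -> is_double_series F l ->
  is_series (fun n => rsum (S n) (fun k => F k (n - k)%nat)) l.
Proof.
  intros Hpos [Hrow Hl].
  set (T := fun k n => if (k <=? n)%nat then F k (n - k)%nat else 0).
  assert (Tpos : forall k n, 0 <= T k n).
  { intros k n. unfold T. destruct (k <=? n)%nat; [apply Hpos|lra]. }
  assert (Trow : forall k, is_series (T k) (Series (F k))).
  { intros k. apply (is_series_shift_zeros _ k).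
    - intros n Hn. unfold T. destruct (Nat.leb_spec k n); [lia|reflexivity].
    - apply (is_series_ext (F k)); [|apply Series_correct, Hrow].
      intros n. unfold T. destruct (Nat.leb_spec k (k + n)); [|lia]. f_equal. lia. }
  assert (HT : is_double_series T l).
  { split; [intros k; eexists; apply Trow|].
    apply (is_series_ext (fun k => Series (F k))); auto.
    intros k. symmetry. apply is_series_unique, Trow. }
  destruct (is_double_series_swap T l Tpos HT) as [_ HTl].
  apply (is_series_ext (fun n => Series (fun k => T k n))); [|exact HTl].
  intros n. assert (Hfin : is_series (fun k => T k n) (rsum (S n) (fun k => T k n))).
  { apply is_series_finite.
    intros k Hk. unfold T. destruct (Nat.leb_spec k n); [lia|reflexivity]. }
  rewrite (is_series_unique _ _ Hfin).
  apply rsum_ext. intros k Hk. unfold T. destruct (Nat.leb_spec k n); [reflexivity|lia].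
Qed.

(* Pascal's rule holds for all indices of [binom] ([binom n k = 0] for [n < k]),
   which is what the partial-fraction recursion needs; [Binomial.C] only agrees
   with it for [k <= n]. *)
Fixpoint binom (n k : nat) : R :=
  match n, k with
  | _, O => 1
  | O, S _ => 0
  | S n', S k' => binom n' k' + binom n' (S k')
  end.

Lemma binom_n0 n : binom n 0 = 1.
Proof. destruct n; reflexivity. Qed.

Lemma binom_gt n k : (n < k)%nat -> binom n k = 0.
Proof.
  revert k. induction n as [|n IH]; intros k Hk; destruct k; try lia; simpl; auto.
  rewrite !IH by lia. ring.
Qed.

Lemma binom_C n k : (k <= n)%nat -> binom n k = Binomial.C n k.
Proof.
  revert k. induction n as [|n IH]; intros k Hk.
  - destruct k; [|lia]. rewrite C_n_0. reflexivity.
  - destruct k as [|k]; [rewrite binom_n0, C_n_0; reflexivity|]. simpl.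
    destruct (Nat.eq_dec k n) as [->|Hkn].
    + rewrite (binom_gt n (S n)), IH, !C_n_n by lia. ring.
    + rewrite !IH by lia. apply pascal. lia.
Qed.

Lemma pow_m1_sq n : (-1) ^ n * (-1) ^ n = 1.
Proof. rewrite <- Rpow_mult_distr. replace (-1 * -1) with 1 by ring. apply pow1. Qed.

Section PartialFractions.

Variables u v e : R.
Hypothesis Huv : u * v = e * (u - v).

Definition pfrac_u (t s : nat) : R :=
  rsum t (fun j => (-1) ^ j * binom (s + j - 1) j * e ^ (s + j) * u ^ (t - j)).
Definition pfrac_v (t s : nat) : R :=
  rsum s (fun i => binom (t + i - 1) i * e ^ (t + i) * v ^ (s - i)).

Lemma pfrac_u_rec t s : e * pfrac_u (S t) s - e * pfrac_u t (S s) = pfrac_u (S t) (S s).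
Proof.
  unfold pfrac_u. rewrite !rsum_recl, <- !rsum_scal.
  rewrite !Nat.add_0_r, !binom_n0. simpl (S t - 0)%nat.
  replace (rsum t (fun k => (-1) ^ S k * binom (S s + S k - 1) (S k) * e ^ (S s + S k)
                              * u ^ (S t - S k)))
    with (rsum t (fun k => e * ((-1) ^ S k * binom (s + S k - 1) (S k) * e ^ (s + S k)
                                 * u ^ (S t - S k)))
          - rsum t (fun k => e * ((-1) ^ k * binom (S s + k - 1) k * e ^ (S s + k)
                                   * u ^ (t - k)))).
  - rewrite Rmult_plus_distr_l, <- rsum_scal. simpl (e ^ S s). ring.
  - match goal with |- ?A - ?B = ?C => enough (A = C + B) by lra end.
    rewrite <- rsum_plus. apply rsum_ext. intros k _.
    replace (s + S k - 1)%nat with (s + k)%nat by lia.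
    replace (S s + k - 1)%nat with (s + k)%nat by lia.
    replace (S s + S k - 1)%nat with (S (s + k)) by lia.
    replace (s + S k)%nat with (S (s + k)) by lia.
    replace (S s + S k)%nat with (S (S (s + k))) by lia.
    replace (S s + k)%nat with (S (s + k)) by lia.
    simpl (S t - S k)%nat. simpl binom. simpl pow. ring.
Qed.

Lemma pfrac_v_rec t s : e * pfrac_v (S t) s + e * pfrac_v t (S s) = pfrac_v (S t) (S s).
Proof.
  unfold pfrac_v. rewrite !rsum_recl, <- !rsum_scal, !Nat.add_0_r, !binom_n0.
  simpl (S s - 0)%nat.
  replace (rsum s (fun k => binom (S t + S k - 1) (S k) * e ^ (S t + S k) * v ^ (S s - S k)))
    with (rsum s (fun k => e * (binom (S t + k - 1) k * e ^ (S t + k) * v ^ (s - k)))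
          + rsum s (fun k => e * (binom (t + S k - 1) (S k) * e ^ (t + S k)
                                  * v ^ (S s - S k)))).
  - rewrite Rmult_plus_distr_l, <- rsum_scal. simpl (e ^ S t). ring.
  - rewrite <- rsum_plus. apply rsum_ext. intros k _.
    replace (S t + k - 1)%nat with (t + k)%nat by lia.
    replace (t + S k - 1)%nat with (t + k)%nat by lia.
    replace (S t + S k - 1)%nat with (S (t + k)) by lia.
    replace (t + S k)%nat with (S (t + k)) by lia.
    replace (S t + S k)%nat with (S (S (t + k))) by lia.
    replace (S t + k)%nat with (S (t + k)) by lia.
    simpl (S s - S k)%nat. simpl binom. simpl pow. ring.
Qed.

Lemma pow_mul_pfrac t s : (1 <= t + s)%nat -> u ^ t * v ^ s = pfrac_u t s + (-1) ^ t * pfrac_v t s.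
Proof.
  remember (t + s)%nat as n eqn:Hn. revert t s Hn.
  induction n as [|n IH]; intros t s Hn H1; [lia|].
  destruct t as [|t], s as [|s]; try lia.
  - unfold pfrac_u, pfrac_v. rewrite rsum_recl, (rsum_eq0 s).
    + simpl. ring.
    + intros k _. rewrite binom_gt by lia. ring.
  - unfold pfrac_u, pfrac_v. rewrite rsum_recl, (rsum_eq0 t).
    + simpl. ring.
    + intros k _. rewrite binom_gt by lia. ring.
  - assert (Hstep : u ^ S t * v ^ S s = e * (u ^ S t * v ^ s - u ^ t * v ^ S s)).
    { simpl. replace (u * u ^ t * (v * v ^ s)) with (u * v * (u ^ t * v ^ s)) by ring.
      rewrite Huv. ring. }
    rewrite Hstep, (IH (S t) s), (IH t (S s)), <- pfrac_u_rec, <- pfrac_v_rec by lia.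
    simpl pow. ring.
Qed.

Lemma signed_pow_mul_split t s : (1 <= t)%nat -> (1 <= s)%nat ->
  (-1) ^ t * (u ^ t * v ^ s) =
    rsum (s - 1) (fun i => Binomial.C (t + i - 1) i * (e ^ (t + i) * v ^ (s - i)))
  + (-1) ^ t * rsum (t - 1) (fun j => (-1) ^ j * Binomial.C (s + j - 1) j
                                       * (e ^ (s + j) * u ^ (t - j)))
  - Binomial.C (s + t - 2) (s - 1) * (e ^ (s + t - 1) * (u - v)).
Proof.
  intros Ht Hs. destruct t as [|t]; [lia|]. destruct s as [|s]; [lia|].
  rewrite pow_mul_pfrac by lia. unfold pfrac_u, pfrac_v. rewrite !rsum_recr.
  replace (S t - 1)%nat with t by lia. replace (S s - 1)%nat with s by lia.
  replace (S s + S t - 2)%nat with (s + t)%nat by lia.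
  replace (S s + S t - 1)%nat with (S (s + t)) by lia.
  replace (S s + t - 1)%nat with (s + t)%nat by lia.
  replace (S t + s - 1)%nat with (s + t)%nat by lia.
  replace (S s + t)%nat with (S (s + t)) by lia.
  replace (S t + s)%nat with (S (s + t)) by lia.
  replace (S t - t)%nat with 1%nat by lia. replace (S s - s)%nat with 1%nat by lia.
  rewrite !binom_C, (pascal_step1 (s + t) t) by lia.
  replace (s + t - t)%nat with s by lia.
  rewrite (rsum_ext s (fun i => binom (S t + i - 1) i * e ^ (S t + i) * v ^ (S s - i))
             (fun i => Binomial.C (S t + i - 1) i * (e ^ (S t + i) * v ^ (S s - i))))
    by (intros i Hi; rewrite binom_C by lia; ring).
  rewrite (rsum_ext t (fun j => (-1) ^ j * binom (S s + j - 1) j * e ^ (S s + j) * u ^ (S t - j))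
             (fun j => (-1) ^ j * Binomial.C (S s + j - 1) j * (e ^ (S s + j) * u ^ (S t - j))))
    by (intros j Hj; rewrite binom_C by lia; ring).
  pose proof (pow_m1_sq t) as Hsq. simpl pow.
  set (x := (-1) ^ t) in *. set (A := rsum t _). set (B := rsum s _).
  set (K := Binomial.C (s + t) s). set (E := e * e ^ (s + t)).
  transitivity (B + -1 * x * A - K * (E * (u - v)) + (x * x - 1) * (B - K * E * (u - v)));
    [ring|rewrite Hsq; ring].
Qed.

End PartialFractions.

Definition oddR (k : nat) : R := INR (2 * k + 1).

Lemma oddR_ge1 k : 1 <= oddR k.
Proof. unfold oddR. rewrite plus_INR, mult_INR. simpl. pose proof (pos_INR k) as Hk. lra. Qed.

Lemma oddR_pos k : 0 < oddR k.
Proof. pose proof (oddR_ge1 k) as Hk. lra. Qed.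

Lemma inv_pow_nonneg x p : 0 < x -> 0 <= / x ^ p.
Proof. intros. apply Rlt_le, Rinv_0_lt_compat, pow_lt; auto. Qed.

Lemma inv_pow_le x p q : 1 <= x -> (q <= p)%nat -> / x ^ p <= / x ^ q.
Proof. intros Hx Hqp. apply Rinv_le_contravar; [apply pow_lt; lra|apply Rle_pow; auto]. Qed.

Lemma is_lim_seq_inv_succ : is_lim_seq (fun n => / INR (n + 1)) 0.
Proof.
  assert (Hinf : is_lim_seq (fun n => INR (n + 1)) p_infty)
    by (apply (is_lim_seq_incr_n INR 1 p_infty), is_lim_seq_INR).
  exact (is_lim_seq_inv _ _ Hinf ltac:(discriminate)).
Qed.

Lemma rsum_shift_diff (g : nat -> R) m N :
  rsum N (fun k => g k - g (k + m)%nat) = rsum m g - rsum m (fun r => g (N + r)%nat).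
Proof.
  induction N as [|N IH]; [simpl; change (fun r => g r) with g; ring|].
  rewrite rsum_recr, IH.
  pose proof (rsum_telescope m (fun r => g (N + r)%nat)) as Htel. cbv beta in Htel.
  rewrite rsum_minus, Nat.add_0_r in Htel.
  rewrite (rsum_ext m (fun r => g (S N + r)%nat) (fun r => g (N + S r)%nat))
    by (intros; f_equal; lia).
  lra.
Qed.

Lemma is_series_shift_diff (g : nat -> R) m :
  is_lim_seq g 0 -> is_series (fun k => g k - g (k + m)%nat) (rsum m g).
Proof.
  intros Hg.
  assert (Htail : is_lim_seq (fun N => rsum m (fun r => g (S N + r)%nat)) 0).
  { induction m as [|m IH].
    - apply is_lim_seq_const.
    - replace (Finite 0) with (Rbar_plus 0 0) by (simpl; f_equal; ring).
      apply (is_lim_seq_plus' _ _ 0 0 IH).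
      apply (is_lim_seq_ext (fun N => g (N + S m)%nat)); [intros; f_equal; lia|].
      apply (is_lim_seq_incr_n g (S m) 0), Hg. }
  change (is_lim_seq (sum_n (fun k => g k - g (k + m)%nat)) (rsum m g)).
  apply (is_lim_seq_ext (fun N => rsum m g - rsum m (fun r => g (S N + r)%nat))).
  - intros N. rewrite rsum_sum_n, rsum_shift_diff. reflexivity.
  - pose proof (is_lim_seq_minus' _ _ (rsum m g) 0 (is_lim_seq_const _) Htail) as Hlim.
    rewrite Rminus_0_r in Hlim. exact Hlim.
Qed.

Lemma is_series_harmonic_diff m :
  is_series (fun k => / INR (k + 1) - / INR (k + m + 1)) (H m).
Proof. exact (is_series_shift_diff (fun k => / INR (k + 1)) m is_lim_seq_inv_succ). Qed.

Lemma ex_series_inv_consecutive : ex_series (fun n => / ((INR n + 1) * (INR n + 2))).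
Proof.
  exists (H 1). apply (is_series_ext (fun k => / INR (k + 1) - / INR (k + 1 + 1)));
    [|apply is_series_harmonic_diff].
  intros n. rewrite !plus_INR. simpl. pose proof (pos_INR n) as Hn. field. lra.
Qed.

Lemma inv_oddR_sq_le k : / oddR k ^ 2 <= 2 * / ((INR k + 1) * (INR k + 2)).
Proof.
  unfold oddR. rewrite plus_INR, mult_INR. simpl. pose proof (pos_INR k) as Hk.
  replace (2 * / ((INR k + 1) * (INR k + 2))) with (/ ((INR k + 1) * (INR k + 2) / 2))
    by (field; nra).
  apply Rinv_le_contravar; nra.
Qed.

Lemma ex_series_inv_oddR_pow p : (2 <= p)%nat -> ex_series (fun n => / oddR n ^ p).
Proof.
  intros Hp. apply (ex_series_nonneg_le _ (fun n => 2 * / ((INR n + 1) * (INR n + 2)))).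
  - intros n. split; [apply inv_pow_nonneg, oddR_pos|].
    apply (Rle_trans _ (/ oddR n ^ 2)); [apply inv_pow_le; auto using oddR_ge1|].
    apply inv_oddR_sq_le.
  - apply (ex_series_scal_l 2 _ ex_series_inv_consecutive).
Qed.

Lemma lambda_oddR p : lambda p = Series (fun n => / oddR n ^ p).
Proof. reflexivity. Qed.

Lemma ln_le_sub1 z : 0 < z -> ln z <= z - 1.
Proof.
  intros Hz. rewrite <- (ln_exp (z - 1)). apply ln_le; auto.
  pose proof (exp_ineq1_le (z - 1)) as Hexp. lra.
Qed.

Lemma ln_succ_sub_le_inv x : 0 < x -> ln (x + 1) - ln x <= / x.
Proof.
  intros Hx. rewrite <- ln_div by lra.
  apply (Rle_trans _ ((x + 1) / x - 1)); [apply ln_le_sub1, Rdiv_lt_0_compat; lra|].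
  right. field. lra.
Qed.

Lemma inv_le_ln_sub_pred x : 1 < x -> / x <= ln x - ln (x - 1).
Proof.
  intros Hx.
  assert (Hle := ln_le_sub1 ((x - 1) / x) ltac:(apply Rdiv_lt_0_compat; lra)).
  rewrite ln_div in Hle by lra.
  replace ((x - 1) / x - 1) with (- / x) in Hle by (field; lra). lra.
Qed.

Lemma H_S n : H (S n) = H n + / INR (S n).
Proof. unfold H. rewrite rsum_recr, Nat.add_1_r. reflexivity. Qed.

Lemma H_nonneg n : 0 <= H n.
Proof.
  apply rsum_nonneg. intros k _. apply Rlt_le, Rinv_0_lt_compat, lt_0_INR. lia.
Qed.

Lemma harmonic_diff_le_ln n j : (1 <= n)%nat -> H (n + j) - H n <= ln (INR (n + j)) - ln (INR n).
Proof.
  intros Hn. induction j as [|j IH]; [rewrite Nat.add_0_r; lra|].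
  rewrite Nat.add_succ_r, H_S.
  assert (Hx : 1 < INR (S (n + j))).
  { rewrite S_INR, plus_INR. assert (Hn1 : 1 <= INR n) by (apply (le_INR 1); auto).
    pose proof (pos_INR j) as Hj. lra. }
  pose proof (inv_le_ln_sub_pred _ Hx) as Hstep. rewrite S_INR in *.
  replace (INR (n + j) + 1 - 1) with (INR (n + j)) in Hstep by ring. lra.
Qed.

Lemma harmonic_diff_ge_ln n j : ln (INR (n + j + 1)) - ln (INR (n + 1)) <= H (n + j) - H n.
Proof.
  induction j as [|j IH]; [rewrite Nat.add_0_r; lra|].
  replace (n + S j)%nat with (S (n + j)) by lia. rewrite H_S.
  assert (Hx : 0 < INR (n + j + 1)) by (apply lt_0_INR; lia).
  pose proof (ln_succ_sub_le_inv _ Hx) as Hstep.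
  replace (INR (n + j + 1) + 1) with (INR (S (n + j) + 1)) in Hstep
    by (rewrite !plus_INR, S_INR, plus_INR; ring).
  replace (INR (n + j + 1)) with (INR (S (n + j))) in Hstep at 2 by (f_equal; lia).
  lra.
Qed.

Lemma alternating_harmonic_partial N :
  rsum N (fun k => / INR (2 * k + 1) - / INR (2 * k + 2)) = H (2 * N) - H N.
Proof.
  induction N as [|N IH]; [unfold H; simpl; ring|].
  rewrite rsum_recr, IH. replace (2 * S N)%nat with (S (S (2 * N))) by lia.
  rewrite !H_S. replace (2 * N + 1)%nat with (S (2 * N)) by lia.
  replace (2 * N + 2)%nat with (S (S (2 * N))) by lia.
  rewrite !S_INR, mult_INR. simpl. pose proof (pos_INR N) as HN. field. lra.
Qed.

(* The partial sums [H (2 n) - H n] lie between [ln 2 - 1/n] and [ln 2]. *)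
Lemma is_series_alternating_harmonic :
  is_series (fun k => / INR (2 * k + 1) - / INR (2 * k + 2)) (ln 2).
Proof.
  change (is_lim_seq (sum_n (fun k => / INR (2 * k + 1) - / INR (2 * k + 2))) (ln 2)).
  apply (is_lim_seq_le_le (fun N => ln 2 - / INR (N + 1)) _ (fun _ => ln 2)).
  - intros N. rewrite rsum_sum_n, alternating_harmonic_partial.
    replace (2 * S N)%nat with (S N + S N)%nat by lia.
    assert (Hn : 0 < INR (S N)) by (apply lt_0_INR; lia).
    assert (Hln2 : ln (INR (S N + S N)) = ln 2 + ln (INR (S N)))
      by (rewrite plus_INR, <- ln_mult by lra; f_equal; ring).
    split.
    + pose proof (harmonic_diff_ge_ln (S N) (S N)) as Hge.
      assert (Hmono : ln (INR (S N + S N)) <= ln (INR (S N + S N + 1)))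
        by (apply ln_le; [apply lt_0_INR|apply le_INR]; lia).
      pose proof (ln_succ_sub_le_inv _ Hn) as Hstep.
      rewrite (plus_INR (S N) 1), Nat.add_1_r in *. simpl (INR 1) in *. lra.
    + pose proof (harmonic_diff_le_ln (S N) (S N) ltac:(lia)) as Hle. lra.
  - pose proof (is_lim_seq_minus' _ _ (ln 2) 0 (is_lim_seq_const _) is_lim_seq_inv_succ) as Hlim.
    rewrite Rminus_0_r in Hlim. exact Hlim.
  - apply is_lim_seq_const.
Qed.

Lemma is_series_log_kernel m :
  is_series (fun k => / oddR k - / (oddR k + oddR m)) (ln 2 + H m / 2).
Proof.
  apply (is_series_ext (fun k => (/ INR (2 * k + 1) - / INR (2 * k + 2))
                                  + / 2 * (/ INR (k + 1) - / INR (k + m + 1)))).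
  - intros k. unfold oddR. rewrite !plus_INR, !mult_INR. simpl.
    pose proof (pos_INR k) as Hk. pose proof (pos_INR m) as Hm. field. lra.
  - apply (is_series_plus _ _ _ _ is_series_alternating_harmonic).
    replace (H m / 2) with (/ 2 * H m) by (unfold Rdiv; ring).
    apply (is_series_scal_l (/ 2) _ _ (is_series_harmonic_diff m)).
Qed.

(* Abel summation against the telescoping weights [1/((m+1)(m+2))]. *)
Lemma harmonic_weighted_partial_sum N :
  rsum N (fun m => H m * / ((INR m + 1) * (INR m + 2))) + H N * / (INR N + 1)
  = 1 - / (INR N + 1).
Proof.
  induction N as [|N IH]; [unfold H; simpl; field|].
  rewrite rsum_recr, H_S, S_INR. pose proof (pos_INR N) as HN.
  transitivity (rsum N (fun m => H m * / ((INR m + 1) * (INR m + 2))) + H N * / (INR N + 1)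
                + / ((INR N + 1) * (INR N + 2))); [field; lra|].
  rewrite IH. field. lra.
Qed.

Lemma ex_series_harmonic_inv_oddR_pow a :
  (2 <= a)%nat -> ex_series (fun m => H m * / oddR m ^ a).
Proof.
  intros Ha.
  assert (Hw : ex_series (fun m => H m * / ((INR m + 1) * (INR m + 2)))).
  { apply (ex_series_nonneg_bounded _ 1).
    - intros m. pose proof (pos_INR m) as Hm. apply Rmult_le_pos; [apply H_nonneg|].
      apply Rlt_le, Rinv_0_lt_compat. nra.
    - intros N. pose proof (harmonic_weighted_partial_sum N) as Hsum. pose proof (pos_INR N) as HN.
      assert (Hinv : 0 < / (INR N + 1)) by (apply Rinv_0_lt_compat; lra).
      assert (HtermN : 0 <= H N * / (INR N + 1)) by (apply Rmult_le_pos; [apply H_nonneg|lra]).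
      lra. }
  apply (ex_series_nonneg_le _ (fun m => 2 * (H m * / ((INR m + 1) * (INR m + 2))))).
  - intros m. pose proof (H_nonneg m) as Hm. split.
    + apply Rmult_le_pos; [lra|apply inv_pow_nonneg, oddR_pos].
    + assert (Hbound : / oddR m ^ a <= 2 * / ((INR m + 1) * (INR m + 2))).
      { apply (Rle_trans _ (/ oddR m ^ 2)); [apply inv_pow_le; auto using oddR_ge1|].
        apply inv_oddR_sq_le. }
      nra.
  - apply (ex_series_scal_l 2 _ Hw).
Qed.

(* [oddR k + oddR m = 2 (k + m + 1)], so the antidiagonal [k + m = n] of this kernel
   sums to the [n]-th term of [sigmaST s t / 2 ^ s]. *)
Definition sigma_kernel (s t k m : nat) : R := / oddR k ^ t * / (oddR k + oddR m) ^ s.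

Lemma sigma_kernel_nonneg s t k m : 0 <= sigma_kernel s t k m.
Proof.
  pose proof (oddR_pos k) as Hk. pose proof (oddR_pos m) as Hm.
  apply Rmult_le_pos; apply inv_pow_nonneg; lra.
Qed.

Lemma sigma_kernel_le_telescope s t k m : (2 <= s)%nat -> (1 <= t)%nat ->
  sigma_kernel s t k m <= / oddR k * (/ 2 * (/ INR (k + m + 1) - / INR (k + S m + 1))).
Proof.
  intros Hs Ht. unfold sigma_kernel.
  assert (Hsum : oddR k + oddR m = 2 * INR (k + m + 1))
    by (unfold oddR; rewrite !plus_INR, !mult_INR; simpl; ring).
  assert (Hsucc : INR (k + S m + 1) = INR (k + m + 1) + 1)
    by (rewrite <- S_INR; f_equal; lia).
  rewrite Hsum, Hsucc. set (n := INR (k + m + 1)).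
  assert (Hn : 1 <= n) by (apply (le_INR 1); lia).
  apply Rmult_le_compat; [apply inv_pow_nonneg, oddR_pos|apply inv_pow_nonneg; lra| |].
  - rewrite <- (pow_1 (oddR k)) at 2. apply inv_pow_le; auto using oddR_ge1.
  - apply (Rle_trans _ (/ (2 * n) ^ 2)); [apply inv_pow_le; auto; lra|].
    replace (/ 2 * (/ n - / (n + 1))) with (/ (2 * n * (n + 1))) by (field; lra).
    apply Rinv_le_contravar; simpl; nra.
Qed.

Lemma ex_double_series_sigma_kernel s t : (2 <= s)%nat -> (1 <= t)%nat ->
  exists l, is_double_series (sigma_kernel s t) l.
Proof.
  intros Hs Ht.
  apply (ex_double_series_bounded _ (fun k => / oddR k * (/ 2 * / INR (k + 1))));
    [apply sigma_kernel_nonneg| |].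
  - intros k N. pose proof (oddR_pos k) as Hk.
    apply (Rle_trans _ _ _ (rsum_le _ _ _ (fun m _ => sigma_kernel_le_telescope s t k m Hs Ht))).
    rewrite rsum_scal, rsum_scal, (rsum_telescope N (fun m => / INR (k + m + 1))), Nat.add_0_r.
    assert (Htail : 0 <= / INR (k + N + 1)) by (apply Rlt_le, Rinv_0_lt_compat, lt_0_INR; lia).
    apply Rmult_le_compat_l; [apply Rlt_le, Rinv_0_lt_compat; lra|lra].
  - apply (ex_series_nonneg_le _ (fun n => / ((INR n + 1) * (INR n + 2))));
      [|apply ex_series_inv_consecutive].
    intros k. pose proof (oddR_pos k) as Hk. pose proof (pos_INR k) as Hk'.
    rewrite plus_INR. simpl (INR 1).
    replace (/ oddR k * (/ 2 * / (INR k + 1))) with (/ (oddR k * 2 * (INR k + 1)))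
      by (field; lra).
    split; [apply Rlt_le, Rinv_0_lt_compat; nra|].
    apply Rinv_le_contravar; [nra|]. unfold oddR. rewrite plus_INR, mult_INR. simpl. nra.
Qed.

Lemma antidiagonal_sigma_kernel s t n :
  rsum (S n) (fun k => sigma_kernel s t k (n - k)) = / 2 ^ s * (Sodd t (n + 1) / INR (n + 1) ^ s).
Proof.
  unfold Sodd, Rdiv. rewrite Nat.add_1_r, (Rmult_comm (rsum _ _)), <- rsum_scal, <- rsum_scal.
  apply rsum_ext. intros k Hk. unfold sigma_kernel.
  replace (oddR k + oddR (n - k)) with (2 * INR (S n))
    by (unfold oddR; rewrite <- plus_INR; replace (2 * k + 1 + (2 * (n - k) + 1))%nat
          with (2 * S n)%nat by lia; rewrite mult_INR; reflexivity).
  rewrite Rpow_mult_distr, Rinv_mult. unfold oddR. ring.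
Qed.

Lemma is_double_series_sigma_kernel s t : (2 <= s)%nat -> (1 <= t)%nat ->
  is_double_series (sigma_kernel s t) (sigmaST s t / 2 ^ s).
Proof.
  intros Hs Ht. destruct (ex_double_series_sigma_kernel s t Hs Ht) as [l Hl].
  replace (sigmaST s t / 2 ^ s) with l; [exact Hl|].
  pose proof (is_series_antidiagonal _ _ (sigma_kernel_nonneg s t) Hl) as Hdiag.
  rewrite <- (is_series_unique _ _ Hdiag), (Series_ext _ _ (antidiagonal_sigma_kernel s t)).
  rewrite Series_scal_l. unfold sigmaST, Rdiv. ring.
Qed.

Lemma is_double_series_sigma_swapped q p : (2 <= q)%nat -> (1 <= p)%nat ->
  is_double_series (fun k m => / oddR m ^ p * / (oddR k + oddR m) ^ q) (sigmaST q p / 2 ^ q).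
Proof.
  intros Hq Hp.
  apply (is_double_series_ext (fun k m => sigma_kernel q p m k)).
  - intros k m. unfold sigma_kernel. rewrite Rplus_comm. reflexivity.
  - apply is_double_series_swap; [apply sigma_kernel_nonneg|].
    apply is_double_series_sigma_kernel; auto.
Qed.

Lemma is_double_series_lambda_prod p q : (2 <= p)%nat -> (2 <= q)%nat ->
  is_double_series (fun k m => / oddR m ^ p * / oddR k ^ q) (lambda p * lambda q).
Proof.
  intros Hp Hq. rewrite Rmult_comm, !lambda_oddR.
  apply (is_double_series_ext (fun k m => / oddR k ^ q * / oddR m ^ p)); [intros; ring|].
  apply is_double_series_prod; apply Series_correct, ex_series_inv_oddR_pow; auto.
Qed.

Lemma is_double_series_log a : (2 <= a)%nat ->
  is_double_series (fun k m => / oddR m ^ a * (/ oddR k - / (oddR k + oddR m)))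
    (ln 2 * lambda a + / 2 * Series (fun n => H (n + 1) / INR (2 * (n + 1) + 1) ^ a)).
Proof.
  intros Ha.
  set (Q := fun m k => / oddR m ^ a * (/ oddR k - / (oddR k + oddR m))).
  assert (Qpos : forall m k, 0 <= Q m k).
  { intros m k. pose proof (oddR_pos k) as Hk. pose proof (oddR_pos m) as Hm.
    apply Rmult_le_pos; [apply inv_pow_nonneg; lra|].
    assert (Hinv : / (oddR k + oddR m) <= / oddR k) by (apply Rinv_le_contravar; lra). lra. }
  assert (Qrow : forall m, is_series (Q m) (ln 2 * / oddR m ^ a + / 2 * (H m * / oddR m ^ a))).
  { intros m. replace (ln 2 * / oddR m ^ a + / 2 * (H m * / oddR m ^ a))
      with (/ oddR m ^ a * (ln 2 + H m / 2)) by (unfold Rdiv; ring).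
    apply (is_series_scal_l (/ oddR m ^ a) _ _ (is_series_log_kernel m)). }
  assert (Hshift : Series (fun m => H m * / oddR m ^ a)
                   = Series (fun n => H (n + 1) / INR (2 * (n + 1) + 1) ^ a)).
  { rewrite Series_incr_1 by (apply ex_series_harmonic_inv_oddR_pow; auto).
    unfold H at 1. simpl rsum. rewrite Rmult_0_l, Rplus_0_l.
    apply Series_ext. intros n. rewrite Nat.add_1_r. reflexivity. }
  apply (is_double_series_swap Q); [exact Qpos|split; [intros m; eexists; apply Qrow|]].
  apply (is_series_ext _ _ _ (fun m => eq_sym (is_series_unique _ _ (Qrow m)))).
  rewrite <- Hshift, lambda_oddR.
  apply (is_series_plus _ _ _ _
    (is_series_scal_l (ln 2) _ _ (Series_correct _ (ex_series_inv_oddR_pow a Ha)))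
    (is_series_scal_l (/ 2) _ _ (Series_correct _ (ex_series_harmonic_inv_oddR_pow a Ha)))).
Qed.

Lemma sigma_kernel_expansion s t k m : (1 <= s)%nat -> (1 <= t)%nat ->
  (-1) ^ t * sigma_kernel s t k m =
    rsum (s - 1) (fun i => Binomial.C (t + i - 1) i
                            * (/ oddR m ^ (t + i) * / (oddR k + oddR m) ^ (s - i)))
  + (-1) ^ t * rsum (t - 1) (fun j => (-1) ^ j * Binomial.C (s + j - 1) j
                                       * (/ oddR m ^ (s + j) * / oddR k ^ (t - j)))
  - Binomial.C (s + t - 2) (s - 1)
      * (/ oddR m ^ (s + t - 1) * (/ oddR k - / (oddR k + oddR m))).
Proof.
  intros Hs Ht. pose proof (oddR_pos k) as Hk. pose proof (oddR_pos m) as Hm.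
  assert (Hpf : / oddR k * / (oddR k + oddR m) = / oddR m * (/ oddR k - / (oddR k + oddR m)))
    by (field; lra).
  unfold sigma_kernel. rewrite <- !pow_inv, (signed_pow_mul_split _ _ _ Hpf t s Ht Hs).
  f_equal. f_equal; [|f_equal]; apply rsum_ext; intros; rewrite !pow_inv; reflexivity.
Qed.

Lemma signed_sigma_expansion s t : (2 <= s)%nat -> (1 <= t)%nat ->
  (-1) ^ t * (sigmaST s t / 2 ^ s) =
    rsum (s - 1) (fun i => Binomial.C (t + i - 1) i * (sigmaST (s - i) (t + i) / 2 ^ (s - i)))
  + (-1) ^ t * rsum (t - 1) (fun j => (-1) ^ j * Binomial.C (s + j - 1) j
                                       * (lambda (s + j) * lambda (t - j)))
  - Binomial.C (s + t - 2) (s - 1)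
      * (ln 2 * lambda (s + t - 1)
         + / 2 * Series (fun n => H (n + 1) / INR (2 * (n + 1) + 1) ^ (s + t - 1))).
Proof.
  intros Hs Ht.
  apply (is_double_series_unique (fun k m => (-1) ^ t * sigma_kernel s t k m)).
  - apply is_double_series_scal, is_double_series_sigma_kernel; auto.
  - apply (is_double_series_ext _ _ _
             (fun k m => eq_sym (sigma_kernel_expansion s t k m ltac:(lia) Ht))).
    apply is_double_series_minus; [apply is_double_series_plus|].
    + apply is_double_series_lincomb. intros i Hi. apply is_double_series_sigma_swapped; lia.
    + apply is_double_series_scal, is_double_series_lincomb. intros j Hj.
      apply is_double_series_lambda_prod; lia.
    + apply is_double_series_scal, is_double_series_log. lia.
Qed.

Theorem mainTheorem10 (s t : nat) (hs : (2 <= s)%nat) (ht : (1 <= t)%nat) :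
  (-1) ^ t * sigmaST s t =
    rsum (s - 1) (fun i => 2 ^ i * Binomial.C (t + i - 1) i * sigmaST (s - i) (t + i))
  + (-1) ^ t * 2 ^ s *
      rsum (t - 1) (fun j => (-1) ^ j * Binomial.C (s + j - 1) j
                              * lambda (s + j) * lambda (t - j))
  - 2 ^ (s - 1) * Binomial.C (s + t - 2) (s - 1) *
      Series (fun n => H (n + 1) / (INR (2 * (n + 1) + 1)) ^ (s + t - 1))
  - 2 ^ s * Binomial.C (s + t - 2) (s - 1) * lambda (s + t - 1) * ln 2.
Proof.
  assert (H2s : 0 < 2 ^ s) by (apply pow_lt; lra).
  assert (Hhalf : 2 ^ s * / 2 = 2 ^ (s - 1))
    by (replace s with (S (s - 1)) at 1 by lia; simpl; field).
  assert (Hscale : 2 ^ s * rsum (s - 1) (fun i => Binomial.C (t + i - 1) i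
                                           * (sigmaST (s - i) (t + i) / 2 ^ (s - i)))
                   = rsum (s - 1) (fun i => 2 ^ i * Binomial.C (t + i - 1) i
                                             * sigmaST (s - i) (t + i))).
  { rewrite <- rsum_scal. apply rsum_ext. intros i Hi.
    replace (2 ^ s) with (2 ^ i * 2 ^ (s - i)) by (rewrite <- pow_add; f_equal; lia).
    assert (H2si : 0 < 2 ^ (s - i)) by (apply pow_lt; lra). field. lra. }
  replace ((-1) ^ t * sigmaST s t) with (2 ^ s * ((-1) ^ t * (sigmaST s t / 2 ^ s)))
    by (field; lra).
  rewrite signed_sigma_expansion by auto.
  rewrite (rsum_ext (t - 1) (fun j => (-1) ^ j * Binomial.C (s + j - 1) j * lambda (s + j)
                                       * lambda (t - j))
             (fun j => (-1) ^ j * Binomial.C (s + j - 1) j * (lambda (s + j) * lambda (t - j))))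
    by (intros; ring).
  rewrite <- Hscale, <- Hhalf. ring.
Qed.
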